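(* Let $\mathbb{X},\mathbb{Y}$ be finite-dimensional real Hilbert spaces, $f:\mathbb{X}\to(-\infty,\infty]$ and $g:\mathbb{Y}\to(-\infty,\infty]$ proper, convex and lower semicontinuous, $K:\mathbb{X}\to\mathbb{Y}$ linear, and $h:\mathbb{X}\to\mathbb{R}$ convex and differentiable with $\bar L$-Lipschitz gradient. Assume (A1) below holds. Let $(\bar x,\bar w,\bar y)\in\mathbf{\Omega}$ and let $\{(z_n,x_n,w_n,y_n,\tau_n)\}$ be generated by the P-GRPDA algorithm described in the context. Then for any $y\in\mathbb{Y}$ there exists a natural number $n_2$ such that for all $n\ge n_2$, $$2\tau_n\mathbb{J}(x_n,w_n,y)+\frac{\psi}{\psi-1}\|\bar x-z_{n+2}\|^2+\frac1\beta\|y-y_n\|^2+\mu'\|x_n-x_{n+1}\|^2\le \frac{\psi}{\psi-1}\|\bar x-z_{n+1}\|^2+\frac1\beta\|y-y_{n-1}\|^2+\mu'\|x_n-x_{n-1}\|^2-\psi\bar\theta_n\|x_n-z_{n+1}\|^2,$$ where $\bar\theta_n=\tau_n/\tau_{n-1}$.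
   Context: $\phi=\frac{1+\sqrt5}{2}$; $K^*$ adjoint of $K$; $g^*$ Fenchel conjugate of $g$; $\operatorname{prox}_{\lambda f}(x)=\arg\min_{u}\{f(u)+\frac{1}{2\lambda}\|u-x\|^2\}$. (A1): the saddle point problem $\min_{x}\max_{y}\mathbb{L}(x,y):=f(x)+h(x)+\langle Kx,y\rangle-g^*(y)$ has a nonempty solution set, and $0\in\operatorname{ri}(K(\operatorname{dom}f)-\operatorname{dom}g)$ (ri = relative interior). (The paper also assumes the proximal maps of $f,g$ are efficiently computable.) $\Phi(x,w):=f(x)+h(x)+g(w)$; $\mathbf{\Omega}:=\{(\bar x,\bar w,\bar y)\in\mathbb{X}\times\mathbb{Y}\times\mathbb{Y}: -K^*\bar y\in\partial f(\bar x)+\nabla h(\bar x),\ \bar y\in\partial g(\bar w),\ K\bar x=\bar w\}$; for the fixed $(\bar x,\bar w,\bar y)\in\mathbf{\Omega}$, $\mathbb{J}(x,w,y):=\Phi(x,w)+\langle y,Kx-w\rangle-\Phi(\bar x,\bar w)$. P-GRPDA: choose $x_0\in\mathbb{X}$, $y_0\in\mathbb{Y}$, set $z_0=x_0$, choose $\beta>0$, $\psi\in(1,\phi]$, $0<2\mu'<\mu<\psi/2$, $\tau_0>0$. For $n=1,2,\dots$: $z_n=\frac{\psi-1}{\psi}x_{n-1}+\frac1\psi z_{n-1}$; $x_n=\operatorname{prox}_{\tau_{n-1}f}\big(z_n-\tau_{n-1}K^*y_{n-1}-\tau_{n-1}\nabla h(x_{n-1})\big)$; $\tau_n=\min\left\{\tau_{n-1},\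 \frac{\mu\|x_n-x_{n-1}\|}{\sqrt\beta\|Kx_n-Kx_{n-1}\|},\ \frac{\mu'\|x_n-x_{n-1}\|}{\|\nabla h(x_n)-\nabla h(x_{n-1})\|}\right\}$, $\sigma_n=\beta\tau_n$; $w_n=\operatorname{prox}_{\frac{1}{\sigma_n}g}\big(\frac{y_{n-1}}{\sigma_n}+Kx_n\big)$; $y_n=y_{n-1}+\sigma_n(Kx_n-w_n)$. Conventions in the $\tau_n$ update: $1/0=\infty$ (a term with zero denominator and nonzero numerator is ignored) and $0/0=\infty$ (so $\tau_n=\tau_{n-1}$ if $x_n=x_{n-1}$). *)

(* X = R^n, Y = R^m as row vectors 'rV[R]_n with the
   standard Euclidean inner product. *)
From HB Require Import structures.
From mathcomp Require Import all_boot all_order all_algebra.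
From mathcomp Require Import all_classical all_reals all_analysis.
Set Implicit Arguments. Unset Strict Implicit. Unset Printing Implicit Defensive.
Import Order.TTheory GRing.Theory Num.Theory.
Import numFieldNormedType.Exports.
Local Open Scope ring_scope.
Local Open Scope classical_set_scope.

Section Defs.
Variable R : realType.

Definition ip {n : nat} (u v : 'rV[R]_n) : R := (u *m v^T) 0 0.
Definition enorm {n : nat} (u : 'rV[R]_n) : R := Num.sqrt (ip u u).

Definition appK {n m : nat} (K : 'M[R]_(n, m)) (x : 'rV[R]_n) : 'rV[R]_m := x *m K.
Definition adjK {n m : nat} (K : 'M[R]_(n, m)) (y : 'rV[R]_m) : 'rV[R]_n := y *m K^T.

Definition phi_gold : R := (1 + Num.sqrt 5) / 2.

Definition dom {n : nat} (f : 'rV[R]_n -> \bar R) : set 'rV[R]_n :=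
  [set x | (f x < +oo)%E].

Definition proper_fun {n : nat} (f : 'rV[R]_n -> \bar R) : Prop :=
  (exists x, (f x < +oo)%E) /\ (forall x, (-oo < f x)%E).

Definition convex_efun {n : nat} (f : 'rV[R]_n -> \bar R) : Prop :=
  forall x y (t : R), 0 < t < 1 ->
    (f (t *: x + (1 - t) *: y)%R <= t%:E * f x + (1 - t)%:E * f y)%E.

Definition convex_rfun {n : nat} (h : 'rV[R]_n -> R) : Prop :=
  forall x y (t : R), 0 < t < 1 ->
    h (t *: x + (1 - t) *: y) <= t * h x + (1 - t) * h y.

Definition subdiff {n : nat} (f : 'rV[R]_n -> \bar R) (x v : 'rV[R]_n) : Prop :=
  (f x < +oo)%E /\ forall u, (f x + (ip v (u - x)%R)%:E <= f u)%E.

Definition conj_fun {n : nat} (g : 'rV[R]_n -> \bar R) (y : 'rV[R]_n) : \bar R :=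
  ereal_sup [set ((ip y w)%:E - g w)%E | w in [set: 'rV[R]_n]].

Definition is_prox {n : nat} (lam : R) (f : 'rV[R]_n -> \bar R) (v u : 'rV[R]_n) : Prop :=
  forall u', (f u + ((2 * lam)^-1 * enorm (u - v) ^+ 2)%R%:E
              <= f u' + ((2 * lam)^-1 * enorm (u' - v) ^+ 2)%R%:E)%E.

Definition aff_hull {n : nat} (S : set 'rV[R]_n) : set 'rV[R]_n :=
  [set x | exists (k : nat) (p : 'I_k -> 'rV[R]_n) (c : 'I_k -> R),
     (forall i, S (p i)) /\ \sum_(i < k) c i = 1 /\ x = \sum_(i < k) c i *: p i].

Definition rel_int {n : nat} (S : set 'rV[R]_n) : set 'rV[R]_n :=
  [set x | aff_hull S x /\ exists2 e : R, 0 < e &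
     forall y, aff_hull S y -> enorm (y - x) < e -> S y].

(* Lagrangian L(x,y) = f x + h x + <Kx,y> - g^*(y) and its saddle points
   (solutions of min_x max_y L); L is finite on dom f x dom g^* *)
Definition lagr {n m : nat} (f : 'rV[R]_n -> \bar R) (h : 'rV[R]_n -> R)
  (K : 'M[R]_(n, m)) (g : 'rV[R]_m -> \bar R) x y : \bar R :=
  (f x + (h x)%:E + (ip (appK K x) y)%:E - conj_fun g y)%E.

Definition saddle_point {n m : nat} (f : 'rV[R]_n -> \bar R) (h : 'rV[R]_n -> R)
  (K : 'M[R]_(n, m)) (g : 'rV[R]_m -> \bar R) (xs : 'rV[R]_n) (ys : 'rV[R]_m) : Prop :=
  dom f xs /\ dom (conj_fun g) ys /\
  forall x y, dom f x -> dom (conj_fun g) y ->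
    (lagr f h K g xs y <= lagr f h K g xs ys)%E /\
    (lagr f h K g xs ys <= lagr f h K g x ys)%E.

Definition assumption_A1 {n m : nat} (f : 'rV[R]_n -> \bar R) (h : 'rV[R]_n -> R)
  (K : 'M[R]_(n, m)) (g : 'rV[R]_m -> \bar R) : Prop :=
  (exists xs ys, saddle_point f h K g xs ys) /\
  rel_int [set appK K x - w | x in dom f & w in dom g] 0.

Definition Omega {n m : nat} (f : 'rV[R]_n -> \bar R) (gh : 'rV[R]_n -> 'rV[R]_n)
  (K : 'M[R]_(n, m)) (g : 'rV[R]_m -> \bar R)
  (xb : 'rV[R]_n) (wb yb : 'rV[R]_m) : Prop :=
  (exists2 v, subdiff f xb v & - adjK K yb = v + gh xb) /\
  subdiff g wb yb /\ appK K xb = wb.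

Definition Phi {n m : nat} (f : 'rV[R]_n -> \bar R) (h : 'rV[R]_n -> R)
  (g : 'rV[R]_m -> \bar R) x w : \bar R := (f x + (h x)%:E + g w)%E.

Definition Jfun {n m : nat} (f : 'rV[R]_n -> \bar R) (h : 'rV[R]_n -> R)
  (K : 'M[R]_(n, m)) (g : 'rV[R]_m -> \bar R) (xb : 'rV[R]_n) (wb : 'rV[R]_m)
  x w y : \bar R :=
  (Phi f h g x w + (ip y (appK K x - w)%R)%:E - Phi f h g xb wb)%E.

(* a/b with the conventions 1/0 = 0/0 = +oo: a term with zero denominator is
   replaced by [dflt] (= tau_{n-1}, which does not change the min) *)
Definition ratio_or (dflt a b : R) : R := if b == 0 then dflt else a / b.

Definition pgrpda {n m : nat} (f : 'rV[R]_n -> \bar R) (h : 'rV[R]_n -> R)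
  (gh : 'rV[R]_n -> 'rV[R]_n) (K : 'M[R]_(n, m)) (g : 'rV[R]_m -> \bar R)
  (beta psi mu mu' : R)
  (z x : nat -> 'rV[R]_n) (w y : nat -> 'rV[R]_m) (tau : nat -> R) : Prop :=
  z 0%N = x 0%N /\ 0 < tau 0%N /\
  forall k : nat, (1 <= k)%N ->
    [/\ z k = ((psi - 1) / psi) *: x k.-1 + psi^-1 *: z k.-1,
        is_prox (tau k.-1) f
          (z k - tau k.-1 *: adjK K (y k.-1) - tau k.-1 *: gh (x k.-1)) (x k),
        tau k = Num.min (tau k.-1)
                  (Num.min
                    (ratio_or (tau k.-1) (mu * enorm (x k - x k.-1))
                       (Num.sqrt beta * enorm (appK K (x k) - appK K (x k.-1))))
                    (ratio_or (tau k.-1) (mu' * enorm (x k - x k.-1))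
                       (enorm (gh (x k) - gh (x k.-1))))),
        is_prox (beta * tau k)^-1 g ((beta * tau k)^-1 *: y k.-1 + appK K (x k)) (w k)
      & y k = y k.-1 + (beta * tau k) *: (appK K (x k) - w k)].

End Defs.

From HB Require Import structures.
From mathcomp Require Import all_boot all_order all_algebra.
From mathcomp Require Import all_classical all_reals all_analysis.
From mathcomp Require Import ring lra.
Set Implicit Arguments. Unset Strict Implicit. Unset Printing Implicit Defensive.
Import Order.TTheory GRing.Theory Num.Theory.
Import numFieldNormedType.Exports.
Local Open Scope ring_scope.
Local Open Scope classical_set_scope.

(* Each proximal step is a variational inequality: x_{n+1} tested at xb,
   x_n tested at x_{n+1} (rescaled by theta_n = tau_n / tau_{n-1}), w_n tested at wb,
   and convexity of h gives the gradient inequality at x_n.  Summing them, the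
   inner products turn into differences of squared norms through the three-point
   identity and the extrapolation identity for
   z_{n+2} = ((psi - 1) x_{n+1} + z_{n+1}) / psi.  Two cross terms remain,
   <grad h(x_{n-1}) - grad h(x_n), x_{n+1} - x_n> and <y_n - y_{n-1}, K(x_n - x_{n+1})>;
   the step-size rule and Young's inequality bound them by
   mu' (|x_n - x_{n-1}|^2 + |x_{n+1} - x_n|^2) and
   |y_n - y_{n-1}|^2 / beta + (tau_n / tau_{n+1})^2 mu^2 |x_{n+1} - x_n|^2.
   The step sizes are nonincreasing and bounded below by a positive constant
   (Lipschitz gradient, bounded K), so both ratios tau_{n-1} / tau_n and
   tau_n / tau_{n+1} are eventually below 1 + eps.  As 2 mu' + mu^2 < psi, a small
   eps lets psi theta_n absorb the leftover coefficient of |x_{n+1} - x_n|^2, and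
   psi <= phi makes 1 + 1/psi - psi theta_n nonnegative. *)

Section Euclidean.
Variables (R : realType) (k : nat).
Implicit Types (u v a b c : 'rV[R]_k) (t : R).

Lemma ipE u v : ip u v = \sum_i u 0 i * v 0 i.
Proof. by rewrite /ip !mxE; apply: eq_bigr => i _; rewrite mxE. Qed.

Lemma ipC u v : ip u v = ip v u.
Proof. by rewrite !ipE; apply: eq_bigr => i _; rewrite mulrC. Qed.

Lemma ipDl a u v : ip (u + v) a = ip u a + ip v a.
Proof. by rewrite !ipE -big_split; apply: eq_bigr => i _; rewrite mxE mulrDl. Qed.

Lemma ipZl t u v : ip (t *: u) v = t * ip u v.
Proof. by rewrite !ipE mulr_sumr; apply: eq_bigr => i _; rewrite mxE mulrA. Qed.

Lemma ipNl u v : ip (- u) v = - ip u v.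
Proof. by rewrite -scaleN1r ipZl mulN1r. Qed.

Lemma ipDr a u v : ip a (u + v) = ip a u + ip a v.
Proof. by rewrite ipC ipDl !(ipC a). Qed.

Lemma ipZr t u v : ip u (t *: v) = t * ip u v.
Proof. by rewrite ipC ipZl ipC. Qed.

Lemma ipNr u v : ip u (- v) = - ip u v.
Proof. by rewrite ipC ipNl ipC. Qed.

Lemma ipBr a u v : ip a (u - v) = ip a u - ip a v.
Proof. by rewrite ipDr ipNr. Qed.

Lemma ip_ge0 u : 0 <= ip u u.
Proof. by rewrite ipE; apply: sumr_ge0 => i _; rewrite -expr2 sqr_ge0. Qed.

Lemma ip_eq0 u : (ip u u == 0) = (u == 0).
Proof.
apply/idP/eqP => [|->]; last by rewrite ipE big1 // => i _; rewrite mxE mul0r.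
rewrite ipE psumr_eq0 => [/allP u0|i _]; last by rewrite -expr2 sqr_ge0.
apply/rowP => i; rewrite mxE; apply/eqP.
by have := u0 i (mem_index_enum _); rewrite mulf_eq0 orbb.
Qed.

Lemma enorm_sqr u : enorm u ^+ 2 = ip u u.
Proof. by rewrite /enorm sqr_sqrtr // ip_ge0. Qed.

Lemma enorm_ge0 u : 0 <= enorm u.
Proof. exact: sqrtr_ge0. Qed.

Lemma enormN u : enorm (- u) = enorm u.
Proof. by rewrite /enorm ipNl ipNr opprK. Qed.

Lemma enormZ t u : enorm (t *: u) = `|t| * enorm u.
Proof. by rewrite /enorm ipZl ipZr mulrA -expr2 sqrtrM ?sqr_ge0 // sqrtr_sqr. Qed.

Lemma enormB u v : enorm (u - v) = enorm (v - u).
Proof. by rewrite -enormN opprB. Qed.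

Lemma enorm_sqrD u v :
  enorm (u + v) ^+ 2 = enorm u ^+ 2 + 2 * ip u v + enorm v ^+ 2.
Proof. by rewrite !enorm_sqr ipDl !ipDr (ipC v u); ring. Qed.

Lemma ipBBZl a b c d t e :
  ip (a - (b - t *: c - t *: d)) e = ip (a - b) e + t * ip c e + t * ip d e.
Proof. by rewrite !(ipDl, ipNl, ipZl); ring. Qed.

Lemma ip_young t u v : 0 < t -> 2 * ip u v <= t * enorm u ^+ 2 + t^-1 * enorm v ^+ 2.
Proof.
move=> t0; have := ip_ge0 (t *: u - v).
rewrite -enorm_sqr enorm_sqrD enormN !enorm_sqr ipZl ipNr !ipZr ipZl.
move=> h; rewrite -(ler_pM2l t0) mulrDr !mulrA mulfV ?gt_eqF // mul1r; lra.
Qed.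

Lemma ip_sqr_le u v : ip u v ^+ 2 <= enorm u ^+ 2 * enorm v ^+ 2.
Proof.
have [->|v0] := eqVneq v 0.
  rewrite ipC ipE big1 => [|i _]; last by rewrite mxE mul0r.
  by rewrite expr0n mulr_ge0 // exprn_ge0 // enorm_ge0.
have vp : 0 < ip v v by rewrite lt_def ip_eq0 v0 ip_ge0.
have := ip_ge0 (ip v v *: u - ip u v *: v).
rewrite -enorm_sqr enorm_sqrD enormN !enorm_sqr !ipZl ipNr !ipZr.
by move=> h; rewrite -subr_ge0 -(pmulr_rge0 _ vp); lra.
Qed.

Lemma ip_three_point a b c :
  2 * ip (a - b) (c - a) = enorm (c - b) ^+ 2 - enorm (c - a) ^+ 2 - enorm (a - b) ^+ 2.
Proof.
have -> : c - b = (c - a) + (a - b) by rewrite addrA subrK.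
by rewrite enorm_sqrD ipC; ring.
Qed.

Lemma ip_extrapolation p a b c : 1 < p ->
  2 * ip (a - b) (c - a) =
  p / (p - 1) * (enorm (c - b) ^+ 2 - enorm (c - ((p - 1) / p *: a + p^-1 *: b)) ^+ 2)
  - (1 + p^-1) * enorm (a - b) ^+ 2.
Proof.
move=> p1; have p0 : p != 0 by rewrite gt_eqF // (lt_trans ltr01).
have p10 : p - 1 != 0 by rewrite subr_eq0 gt_eqF.
have -> : c - ((p - 1) / p *: a + p^-1 *: b) = (c - b) - ((p - 1) / p) *: (a - b).
  by apply/rowP => i; rewrite !mxE; field.
have -> : c - a = (c - b) - (a - b) by rewrite opprB addrA subrK.
move: (c - b) (a - b) => d e.
rewrite !enorm_sqrD !enormN !enorm_sqr ipNr !ipZr !ipZl.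
by rewrite ipBr (ipC e d); field; rewrite p0 p10.
Qed.

End Euclidean.

Section LinearMap.
Variables (R : realType) (k l : nat) (K : 'M[R]_(k, l)).

Lemma appKB u v : appK K (u - v) = appK K u - appK K v.
Proof. exact: mulmxBl. Qed.

Lemma ip_adjK u v : ip (adjK K v) u = ip v (appK K u).
Proof. by rewrite /ip /adjK /appK trmx_mul mulmxA. Qed.

Lemma appK_bounded : exists2 C, 0 <= C & forall u, enorm (appK K u) <= C * enorm u.
Proof.
set S := \sum_j enorm (col j K)^T ^+ 2.
have S0 : 0 <= S by apply: sumr_ge0 => j _; apply: sqr_ge0.
exists (Num.sqrt S) => [|u]; first exact: sqrtr_ge0.
rewrite -ler_sqr ?nnegrE ?mulr_ge0 ?sqrtr_ge0 ?enorm_ge0 // exprMn (sqr_sqrtr S0).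
have -> : enorm (appK K u) ^+ 2 = \sum_j ip u (col j K)^T ^+ 2.
  rewrite enorm_sqr ipE; apply: eq_bigr => j _; rewrite expr2; congr (_ * _);
  by rewrite /appK ipE !mxE; apply: eq_bigr => i _; rewrite !mxE.
rewrite mulr_suml; apply: ler_sum => j _.
by rewrite mulrC; apply: ip_sqr_le.
Qed.

End LinearMap.

Lemma ler_of_forall_addM01 (R : realFieldType) (a b c : R) :
  (forall t, 0 < t < 1 -> a <= b + t * c) -> a <= b.
Proof.
move=> H; apply/ler_addgt0Pr => e e0.
set t := Num.min (2^-1) (e / (`|c| + 1)).
have t0 : 0 < t by rewrite lt_min invr_gt0 ltr0n divr_gt0 // ltr_wpDl.
have t1 : t < 1 by rewrite gt_min invf_lt1 ?ltr1n.
apply: (le_trans (H t _)); first by rewrite t0 t1.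
rewrite lerD2l; apply: (le_trans (ler_wpM2l (ltW t0) (ler_norm c))).
have : t <= e / (`|c| + 1) by rewrite ge_min lexx orbT.
rewrite ler_pdivlMr ?ltr_wpDl // => te; nra.
Qed.

Section ConvexAnalysis.
Variables (R : realType) (k : nat).
Implicit Types (f : 'rV[R]_k -> \bar R) (u v x : 'rV[R]_k).

Lemma proper_fin_num f x : proper_fun f -> (f x < +oo)%E -> f x \is a fin_num.
Proof. by move=> [_ /(_ x) fx] fxoo; rewrite fin_numE gt_eqF ?lt_eqF. Qed.

Lemma is_prox_fin_num lam f v u : proper_fun f -> is_prox lam f v u -> f u \is a fin_num.
Proof.
move=> fp prox; have [[x0 fx0] fgt] := fp; apply: proper_fin_num => //.
have := prox x0; move: fx0 (fgt x0); case: (f x0) => [s| |] //= _ _.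
by case: (f u) => //= r _; exact: ltry.
Qed.

Lemma is_prox_le lam f v u x : 0 < lam -> proper_fun f -> convex_efun f ->
  is_prox lam f v u -> f x \is a fin_num ->
  lam * (fine (f u) - fine (f x)) <= ip (u - v) (x - u).
Proof.
move=> lam0 fp fconv prox fx; have fu := is_prox_fin_num fp prox.
move: (esym (fineK fu)) (esym (fineK fx)) => {fu fx}.
move: (fine (f u)) (fine (f x)) => r s fur fxs.
set P := ip (u - v) (x - u); set Q := enorm (x - u) ^+ 2.
rewrite -[leRHS]mul1r -(mulfV (lt0r_neq0 lam0)) -mulrA ler_pM2l //.
(* Compare the prox objective at u with its value at u + t (x - u), then let t -> 0. *)
apply: (@ler_of_forall_addM01 _ _ _ ((2 * lam)^-1 * Q)) => t /andP[t0 t1].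
set u' := t *: x + (1 - t) *: u.
have conv : (f u' <= (t * s + (1 - t) * r)%:E)%E.
  by have := fconv x u t; rewrite t0 t1 fur fxs -!EFinM -EFinD; apply.
have fu' : f u' \is a fin_num.
  by apply: proper_fin_num => //; apply: le_lt_trans conv (ltry _).
rewrite -(fineK fu') lee_fin in conv.
have := prox u'; rewrite fur -(fineK fu') -!EFinD lee_fin.
have -> : u' - v = (u - v) + t *: (x - u) by apply/rowP => i; rewrite !mxE; ring.
rewrite (enorm_sqrD (u - v)) ipZr -/P [enorm (_ *: _) ^+ 2]enorm_sqr ipZl ipZr -enorm_sqr -/Q.
move=> h; rewrite -(ler_pM2l t0); rewrite invfM in h *; lra.
Qed.

Lemma convex_grad_le (h : 'rV[R]_k -> R) (gh : 'rV[R]_k -> 'rV[R]_k) x y :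
  convex_rfun h -> differentiable h x -> (forall v, 'd h x v = ip (gh x) v) ->
  ip (gh x) (y - x) <= h y - h x.
Proof.
move=> hconv hdiff hgrad; rewrite -hgrad -deriveE //.
set q := fun t : R => t^-1 *: ((h \o shift x) (t *: (y - x)) - h x).
have qr : q @ 0^'+ --> 'D_(y - x) h x.
  have qd : q @ 0^' --> 'D_(y - x) h x by apply: diff_derivable.
  move=> A /qd /nbhs_ballP[_ /posnumP[e] eA]; exists e%:num => //= t et.
  by rewrite lt_def => /andP[t0 _]; apply: eA.
apply: (cvgr_to_le qr); near=> t.
have t0 : 0 < t by near: t; exact: nbhs_right_gt.
have t1 : t < 1 by near: t; apply: nbhs_right_lt; exact: ltr01.
rewrite /q /= -[_ *: _]/(_ * _) ler_pdivrMl //.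
have -> : t *: (y - x) + x = t *: y + (1 - t) *: x.
  by apply/rowP => i; rewrite !mxE; ring.
have := hconv y x t; rewrite t0 t1 => /(_ isT); lra.
Unshelve. all: by end_near.
Qed.

End ConvexAnalysis.

Section RealFacts.
Variable R : realType.

Lemma sqr_le_add1_of_le_phi_gold (p : R) : 0 < p -> p <= phi_gold R -> p ^+ 2 <= p + 1.
Proof.
rewrite /phi_gold ler_pdivlMr // => p0 pphi.
have s5 : Num.sqrt 5 ^+ 2 = 5 :> R by rewrite sqr_sqrtr.
have s0 : 0 <= Num.sqrt 5 :> R := sqrtr_ge0 5.
have s1 : 1 <= Num.sqrt 5 :> R by nra.
have : 0 <= (1 + Num.sqrt 5 - p * 2) * (p * 2 - 1 + Num.sqrt 5) by apply: mulr_ge0; lra.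
lra.
Qed.

Lemma exists_dilation_margin (a b p : R) : 0 <= a -> 0 <= b -> a + b < p ->
  exists2 e, 0 < e & (1 + e) * (a + (1 + e) ^+ 2 * b) <= p.
Proof.
(* e := (p - a - b) / (7 p) works since (1 + e) ^+ 3 <= 1 + 7 e for e <= 1. *)
move=> a0 b0 abp; have p0 : 0 < p by lra.
have d0 : 0 < p - a - b by lra.
set e := (p - a - b) / (7 * p).
have e0 : 0 < e by rewrite divr_gt0 ?mulr_gt0.
have e7 : 7 * e * p = p - a - b by rewrite /e; field; rewrite lt0r_neq0.
have e1 : e <= 1 by nra.
exists e => //.
have : b * (1 + e) ^+ 3 <= b * (1 + 7 * e) by apply: ler_wpM2l => //; nra.
have := mulr_ge0 (ltW e0) (ltW d0); have := mulr_ge0 a0 (ltW e0); lra.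
Qed.

Lemma ratio_or_mulr_le (t d a b : R) : 0 <= a -> 0 <= b -> t <= ratio_or d a b -> t * b <= a.
Proof.
rewrite /ratio_or => a0 b0; have [->|bn0] := eqVneq b 0; first by rewrite mulr0.
by rewrite -ler_pdivlMr // lt_def bn0.
Qed.

Lemma ratio_or_ge (d q M e b : R) : 0 < q -> 0 < M -> 0 <= b -> b <= M * e ->
  Num.min d (q / M) <= ratio_or d (q * e) b.
Proof.
rewrite /ratio_or => q0 M0 b0 bMe; have [_|bn0] := eqVneq b 0; first by rewrite ge_min lexx.
have bp : 0 < b by rewrite lt_def bn0.
rewrite ge_min; apply/orP; right; rewrite ler_pdivlMr // mulrAC ler_pdivrMr //.
by rewrite -mulrA ler_pM2l // mulrC.
Qed.

Lemma nonincreasing_ratio_near1 (u : nat -> R) (c : R) : 0 < c ->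
  (forall k, c <= u k) -> (forall k, u k.+1 <= u k) ->
  forall eps, 0 < eps -> exists N, forall i j, (N <= i)%N -> u i <= (1 + eps) * u j.
Proof.
move=> c0 uc /nonincreasing_seqP u_noninc eps eps0.
have infE : has_inf (range u) by split; [exists (u 0%N), 0%N | exists c => _ [k _ <-]].
have cinf : c <= inf (range u) by apply: lb_le_inf => [|_ [k _ <-]]; [exists (u 0%N), 0%N|].
have [_ [N _ <-] uN] := inf_adherent (mulr_gt0 eps0 (lt_le_trans c0 cinf)) infE.
exists N => i j Ni; have uiN := u_noninc _ _ Ni.
have : inf (range u) <= u j by apply: ge_inf; [exact: infE.2 | exists j].
nra.
Qed.

End RealFacts.

Definition Jreal (R : realType) (n m : nat) (f : 'rV[R]_n -> \bar R) (h : 'rV[R]_n -> R)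
  (K : 'M[R]_(n, m)) (g : 'rV[R]_m -> \bar R) (xb : 'rV[R]_n) (wb : 'rV[R]_m) x w y : R :=
  fine (f x) + h x + fine (g w) + ip y (appK K x - w) - (fine (f xb) + h xb + fine (g wb)).

Lemma JfunE (R : realType) (n m : nat) (f : 'rV[R]_n -> \bar R) (h : 'rV[R]_n -> R)
    (K : 'M[R]_(n, m)) (g : 'rV[R]_m -> \bar R) xb wb x w y :
  f xb \is a fin_num -> g wb \is a fin_num -> f x \is a fin_num -> g w \is a fin_num ->
  Jfun f h K g xb wb x w y = (Jreal f h K g xb wb x w y)%:E.
Proof.
move=> fxb gwb fx gw; rewrite /Jfun /Phi.
by rewrite -(fineK fx) -(fineK gw) -(fineK fxb) -(fineK gwb) /= -!EFinD.
Qed.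

Section PGRPDA.
Variables (R : realType) (n m : nat).
Variables (f : 'rV[R]_n -> \bar R) (g : 'rV[R]_m -> \bar R) (K : 'M[R]_(n, m)).
Variables (h : 'rV[R]_n -> R) (gh : 'rV[R]_n -> 'rV[R]_n) (Lbar : R).
Hypotheses (f_proper : proper_fun f) (f_convex : convex_efun f).
Hypotheses (g_proper : proper_fun g) (g_convex : convex_efun g).
Hypotheses (h_convex : convex_rfun h) (h_diff : forall x, differentiable h x)
  (h_grad : forall x v, 'd h x v = ip (gh x) v).
Hypothesis h_lip : forall x x', enorm (gh x - gh x') <= Lbar * enorm (x - x').
Variables (beta psi mu mu' : R).
Hypotheses (beta_gt0 : 0 < beta) (psi_gt1 : 1 < psi) (mu_gt0 : 0 < mu) (mu'_gt0 : 0 < mu').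
Variables (z x : nat -> 'rV[R]_n) (w y : nat -> 'rV[R]_m) (tau : nat -> R).
Hypothesis alg : pgrpda f h gh K g beta psi mu mu' z x w y tau.

Lemma pgrpda_step k :
  [/\ z k.+1 = ((psi - 1) / psi) *: x k + psi^-1 *: z k,
      is_prox (tau k) f (z k.+1 - tau k *: adjK K (y k) - tau k *: gh (x k)) (x k.+1),
      tau k.+1 = Num.min (tau k)
                  (Num.min
                    (ratio_or (tau k) (mu * enorm (x k.+1 - x k))
                       (Num.sqrt beta * enorm (appK K (x k.+1) - appK K (x k))))
                    (ratio_or (tau k) (mu' * enorm (x k.+1 - x k))
                       (enorm (gh (x k.+1) - gh (x k))))),
      is_prox (beta * tau k.+1)^-1 g ((beta * tau k.+1)^-1 *: y k + appK K (x k.+1)) (w k.+1)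
    & y k.+1 = y k + (beta * tau k.+1) *: (appK K (x k.+1) - w k.+1)].
Proof. by have [_ [_]] := alg; apply. Qed.

Lemma tau_le_prev k : tau k.+1 <= tau k.
Proof. by have [_ _ -> _ _] := pgrpda_step k; rewrite ge_min lexx. Qed.

Lemma tau_grad_test k :
  tau k.+1 * enorm (gh (x k.+1) - gh (x k)) <= mu' * enorm (x k.+1 - x k).
Proof.
apply: (ratio_or_mulr_le (d := tau k)); rewrite ?mulr_ge0 ?enorm_ge0 ?(ltW mu'_gt0) //.
by have [_ _ -> _ _] := pgrpda_step k; rewrite !ge_min lexx !orbT.
Qed.

Lemma tau_K_test k :
  tau k.+1 * (Num.sqrt beta * enorm (appK K (x k.+1) - appK K (x k)))
  <= mu * enorm (x k.+1 - x k).
Proof.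
apply: (ratio_or_mulr_le (d := tau k)); rewrite ?mulr_ge0 ?sqrtr_ge0 ?enorm_ge0 ?(ltW mu_gt0) //.
by have [_ _ -> _ _] := pgrpda_step k; rewrite !ge_min lexx !orbT.
Qed.

Lemma tau_lower_bound : exists2 c, 0 < c & forall k, c <= tau k.
Proof.
have [C C0 KC] := appK_bounded K.
have sb0 : 0 < Num.sqrt beta by rewrite sqrtr_gt0.
set c1 := mu / (Num.sqrt beta * (C + 1)); set c2 := mu' / (`|Lbar| + 1).
have c1_gt0 : 0 < c1 by rewrite divr_gt0 // mulr_gt0 // ltr_wpDl.
have c2_gt0 : 0 < c2 by rewrite divr_gt0 // ltr_wpDl.
have [_ [tau0 _]] := alg.
exists (Num.min (tau 0%N) (Num.min c1 c2)); first by rewrite !lt_min tau0 c1_gt0 c2_gt0.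
elim=> [|k IH]; first by rewrite ge_min lexx.
have [_ _ -> _ _] := pgrpda_step k; rewrite le_min IH le_min /=.
set e := enorm (x k.+1 - x k).
have Kb : Num.sqrt beta * enorm (appK K (x k.+1) - appK K (x k))
          <= Num.sqrt beta * (C + 1) * e.
  by rewrite -mulrA ler_pM2l // -appKB (le_trans (KC _)) // ler_wpM2r ?enorm_ge0 // lerDl.
have Lb : enorm (gh (x k.+1) - gh (x k)) <= (`|Lbar| + 1) * e.
  by rewrite (le_trans (h_lip _ _)) // ler_wpM2r ?enorm_ge0 // (le_trans (ler_norm _)) // lerDl.
apply/andP; split.
- apply: le_trans (ratio_or_ge _ mu_gt0 _ _ Kb).
  + by rewrite le_min IH !ge_min lexx !orbT.
  + by rewrite mulr_gt0 // ltr_wpDl.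
  + by rewrite mulr_ge0 ?enorm_ge0 ?sqrtr_ge0.
- apply: le_trans (ratio_or_ge _ mu'_gt0 _ _ Lb).
  + by rewrite le_min IH !ge_min lexx !orbT.
  + exact: ltr_wpDl.
  + exact: enorm_ge0.
Qed.

Lemma tau_gt0 k : 0 < tau k.
Proof. by have [c c0 ctau] := tau_lower_bound; apply: lt_le_trans c0 (ctau k). Qed.

Lemma grad_cross_le k :
  2 * tau k.+1 * ip (gh (x k) - gh (x k.+1)) (x k.+2 - x k.+1)
  <= mu' * (enorm (x k.+1 - x k) ^+ 2 + enorm (x k.+2 - x k.+1) ^+ 2).
Proof.
have mu'V : 0 < mu'^-1 by rewrite invr_gt0.
rewrite -mulrA -ipZl (le_trans (ip_young _ _ mu'V)) // invrK mulrDr lerD2r.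
rewrite enormZ gtr0_norm ?tau_gt0 // enormB mulrC ler_pdivrMr //.
have := tau_grad_test k; set a := _ * enorm _; set b := enorm _ => ab.
have : a ^+ 2 <= (mu' * b) ^+ 2.
  by rewrite lerXn2r // nnegrE ?mulr_ge0 ?enorm_ge0 ?(ltW mu'_gt0) ?(ltW (tau_gt0 _)).
lra.
Qed.

Lemma K_cross_le k :
  2 * tau k.+1 * ip (y k.+1 - y k) (appK K (x k.+1 - x k.+2))
  <= beta^-1 * enorm (y k.+1 - y k) ^+ 2
     + (tau k.+1 / tau k.+2) ^+ 2 * mu ^+ 2 * enorm (x k.+2 - x k.+1) ^+ 2.
Proof.
have betaV : 0 < beta^-1 by rewrite invr_gt0.
rewrite -mulrA -ipZr (le_trans (ip_young _ _ betaV)) // invrK lerD2l.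
rewrite enormZ gtr0_norm ?tau_gt0 // appKB enormB.
have := tau_K_test k.+1; set a := enorm (_ - _); set e := enorm (_ - _) => ae.
have sq : (tau k.+2 * (Num.sqrt beta * a)) ^+ 2 <= (mu * e) ^+ 2.
  by rewrite lerXn2r // nnegrE ?mulr_ge0 ?sqrtr_ge0 ?enorm_ge0 ?(ltW mu_gt0) ?(ltW (tau_gt0 _)).
have -> : beta * (tau k.+1 * a) ^+ 2
          = (tau k.+1 / tau k.+2) ^+ 2 * (tau k.+2 * (Num.sqrt beta * a)) ^+ 2.
  by rewrite !exprMn (sqr_sqrtr (ltW beta_gt0)); field; rewrite lt0r_neq0 ?tau_gt0.
by rewrite -mulrA ler_wpM2l ?sqr_ge0 // -exprMn.
Qed.

Lemma dual_three_point k yy :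
  2 * tau k.+1 * ip (yy - y k.+1) (appK K (x k.+1) - w k.+1)
  = beta^-1 * (enorm (yy - y k) ^+ 2 - enorm (yy - y k.+1) ^+ 2
               - enorm (y k.+1 - y k) ^+ 2).
Proof.
have [_ _ _ _ yE] := pgrpda_step k.
have dy : y k.+1 - y k = (beta * tau k.+1) *: (appK K (x k.+1) - w k.+1).
  by rewrite yE addrAC subrr add0r.
rewrite -ip_three_point dy ipZl ipC.
by field; rewrite lt0r_neq0.
Qed.

Variables (xb : 'rV[R]_n) (wb : 'rV[R]_m).
Hypotheses (Kxb : appK K xb = wb) (fxb : f xb \is a fin_num) (gwb : g wb \is a fin_num).

Lemma Jfun_iterate k yy :
  Jfun f h K g xb wb (x k.+1) (w k.+1) yy = (Jreal f h K g xb wb (x k.+1) (w k.+1) yy)%:E.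
Proof.
have [_ xP _ wP _] := pgrpda_step k.
by rewrite JfunE // (is_prox_fin_num f_proper xP, is_prox_fin_num g_proper wP).
Qed.

Lemma Jreal_iterate_le k yy :
  tau k.+1 * Jreal f h K g xb wb (x k.+1) (w k.+1) yy <=
    ip (x k.+2 - z k.+2) (xb - x k.+2)
    + psi * (tau k.+1 / tau k) * ip (x k.+1 - z k.+2) (x k.+2 - x k.+1)
    + tau k.+1 * ip (yy - y k.+1) (appK K (x k.+1) - w k.+1)
    + tau k.+1 * ip (y k.+1 - y k) (appK K (x k.+1 - x k.+2))
    + tau k.+1 * ip (gh (x k) - gh (x k.+1)) (x k.+2 - x k.+1).
Proof.
have [_ xP1 _ wP1 yE1] := pgrpda_step k.
have [zE2 xP2 _ _ _] := pgrpda_step k.+1.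
have t0 := tau_gt0 k; have t1 := tau_gt0 k.+1.
have bt1 : 0 < (beta * tau k.+1)^-1 by rewrite invr_gt0 mulr_gt0.
have psi_neq0 : psi != 0 by rewrite gt_eqF // (lt_trans ltr01).
have primal_new := is_prox_le t1 f_proper f_convex xP2 fxb.
have primal_old := is_prox_le t0 f_proper f_convex xP1 (is_prox_fin_num f_proper xP2).
have dual := is_prox_le bt1 g_proper g_convex wP1 gwb.
have smooth := convex_grad_le xb h_convex (h_diff (x k.+1)) (h_grad (x k.+1)).
rewrite ipBBZl ip_adjK in primal_new; rewrite ipBBZl ip_adjK in primal_old.
have ex : x k.+1 - z k.+1 = psi *: (x k.+1 - z k.+2).
  by rewrite zE2; apply/rowP => i; rewrite !mxE; field.
have {}primal_old : tau k.+1 * (fine (f (x k.+1)) - fine (f (x k.+2))) <=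
    psi * (tau k.+1 / tau k) * ip (x k.+1 - z k.+2) (x k.+2 - x k.+1)
    + tau k.+1 * ip (y k) (appK K (x k.+2 - x k.+1))
    + tau k.+1 * ip (gh (x k)) (x k.+2 - x k.+1).
  have := ler_wpM2l (ltW (divr_gt0 t1 t0)) primal_old; rewrite ex.
  by rewrite ipZl !mulrDr !mulrA divfK ?gt_eqF // => le; lra.
have ew : w k.+1 - ((beta * tau k.+1)^-1 *: y k + appK K (x k.+1))
          = - (beta * tau k.+1)^-1 *: y k.+1.
  by rewrite yE1; apply/rowP => i; rewrite !mxE; field; rewrite !lt0r_neq0.
rewrite ew ipZl mulNr -mulrN ler_pM2l // -ipNr opprB in dual.
move: primal_new primal_old (ler_wpM2l (ltW t1) dual) (ler_wpM2l (ltW t1) smooth).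
by rewrite /Jreal !(appKB, Kxb, ipDl, ipNl, ipZl, ipDr, ipNr, ipZr); lra.
Qed.

Lemma pgrpda_descent k yy eps : 0 < eps -> psi ^+ 2 <= psi + 1 ->
  (1 + eps) * (2 * mu' + (1 + eps) ^+ 2 * mu ^+ 2) <= psi ->
  tau k <= (1 + eps) * tau k.+1 -> tau k.+1 <= (1 + eps) * tau k.+2 ->
  2 * tau k.+1 * Jreal f h K g xb wb (x k.+1) (w k.+1) yy
    + (psi / (psi - 1) * enorm (xb - z k.+3) ^+ 2 + beta^-1 * enorm (yy - y k.+1) ^+ 2
       + mu' * enorm (x k.+1 - x k.+2) ^+ 2)
  <= psi / (psi - 1) * enorm (xb - z k.+2) ^+ 2 + beta^-1 * enorm (yy - y k) ^+ 2
     + mu' * enorm (x k.+1 - x k) ^+ 2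
     - psi * (tau k.+1 / tau k) * enorm (x k.+1 - z k.+2) ^+ 2.
Proof.
move=> eps0 psi_sqr margin ratio01 ratio12.
have [zE _ _ _ _] := pgrpda_step k.+2.
have t0 := tau_gt0 k; have t1 := tau_gt0 k.+1; have t2 := tau_gt0 k.+2.
have psi0 : 0 < psi by apply: lt_trans psi_gt1.
set th := tau k.+1 / tau k; set s := tau k.+1 / tau k.+2.
have th_le1 : th <= 1 by rewrite ler_pdivrMr // mul1r tau_le_prev.
have th_ge : (1 + eps)^-1 <= th.
  by rewrite ler_pdivlMr // ler_pdivrMl // ltr_wpDl // ltW.
have s_le : s <= 1 + eps by rewrite ler_pdivrMr.
have mix : 0 <= (1 + psi^-1 - psi * th) * enorm (x k.+2 - z k.+2) ^+ 2.
  apply: mulr_ge0; last exact: sqr_ge0.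
  have : psi <= 1 + psi^-1 by rewrite -(ler_pM2l psi0) mulrDr mulfV ?gt_eqF // mulr1 -expr2.
  have : psi * th <= psi by rewrite ler_piMr // ltW.
  lra.
have absorb : (2 * mu' + s ^+ 2 * mu ^+ 2) * enorm (x k.+2 - x k.+1) ^+ 2
            <= psi * th * enorm (x k.+2 - x k.+1) ^+ 2.
  apply: ler_wpM2r; first exact: sqr_ge0.
  have : s ^+ 2 * mu ^+ 2 <= (1 + eps) ^+ 2 * mu ^+ 2.
    by rewrite ler_wpM2r ?sqr_ge0 // lerXn2r // nnegrE ?divr_ge0 ?ltW // ltr_wpDl.
  have : psi / (1 + eps) <= psi * th by rewrite ler_pM2l.
  have : 2 * mu' + (1 + eps) ^+ 2 * mu ^+ 2 <= psi / (1 + eps).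
    by rewrite ler_pdivlMr ?ltr_wpDl ?(ltW eps0) // mulrC.
  lra.
have := Jreal_iterate_le k yy.
have := ip_extrapolation (x k.+2) (z k.+2) xb psi_gt1; rewrite -zE.
have := congr1 (fun r => psi * th * r) (ip_three_point (x k.+1) (z k.+2) (x k.+2)).
have := dual_three_point k yy; have := grad_cross_le k; have := K_cross_le k.
rewrite (enormB (x k.+1) (x k.+2)) /= -/th -/s; lra.
Qed.

End PGRPDA.

Unset Implicit Arguments.
Set Strict Implicit.

Theorem lemma3p1 (R : realType) (n m : nat)
  (f : 'rV[R]_n -> \bar R) (g : 'rV[R]_m -> \bar R) (K : 'M[R]_(n, m))
  (h : 'rV[R]_n -> R) (gh : 'rV[R]_n -> 'rV[R]_n) (Lbar : R)
  (f_proper : proper_fun f) (f_convex : convex_efun f)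
  (f_lsc : lower_semicontinuous f)
  (g_proper : proper_fun g) (g_convex : convex_efun g)
  (g_lsc : lower_semicontinuous g)
  (h_convex : convex_rfun h)
  (h_diff : forall x, differentiable h x)
  (h_grad : forall x v, 'd h x v = ip (gh x) v)
  (h_lip : forall x x', enorm (gh x - gh x') <= Lbar * enorm (x - x'))
  (A1 : assumption_A1 f h K g)
  (xb : 'rV[R]_n) (wb yb : 'rV[R]_m) (hOmega : Omega f gh K g xb wb yb)
  (beta psi mu mu' : R)
  (hbeta : 0 < beta) (hpsi : 1 < psi <= phi_gold R)
  (hmu : 0 < 2 * mu' < mu) (hmu2 : mu < psi / 2)
  (z x : nat -> 'rV[R]_n) (w y : nat -> 'rV[R]_m) (tau : nat -> R)
  (halg : pgrpda f h gh K g beta psi mu mu' z x w y tau) :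
  forall yy : 'rV[R]_m,
  exists2 n2 : nat, (1 <= n2)%N & forall k : nat, (n2 <= k)%N ->
    ((2 * tau k)%:E * Jfun f h K g xb wb (x k) (w k) yy
      + (psi / (psi - 1) * enorm (xb - z k.+2) ^+ 2
         + beta^-1 * enorm (yy - y k) ^+ 2
         + mu' * enorm (x k - x k.+1) ^+ 2)%:E
     <= (psi / (psi - 1) * enorm (xb - z k.+1) ^+ 2
         + beta^-1 * enorm (yy - y k.-1) ^+ 2
         + mu' * enorm (x k - x k.-1) ^+ 2
         - psi * (tau k / tau k.-1) * enorm (x k - z k.+1) ^+ 2)%:E)%E.
Proof.
move=> yy.
have [[_ [fxb _] _] [[gwb _] Kxb]] := hOmega.
have {}fxb := proper_fin_num f_proper fxb; have {}gwb := proper_fin_num g_proper gwb.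
have /andP[psi_gt1 psi_phi] := hpsi; have /andP[mu'_gt0 mu'_lt] := hmu.
have psi_gt0 : 0 < psi by apply: lt_trans psi_gt1.
have {}mu'_gt0 : 0 < mu' by lra.
have mu_gt0 : 0 < mu by lra.
have psi_sqr := sqr_le_add1_of_le_phi_gold psi_gt0 psi_phi.
have [eps eps0 margin] : exists2 eps, 0 < eps &
    (1 + eps) * (2 * mu' + (1 + eps) ^+ 2 * mu ^+ 2) <= psi.
  by apply: exists_dilation_margin; [lra | exact: sqr_ge0 | nra].
have [c c0 tau_ge_c] := tau_lower_bound h_lip hbeta mu_gt0 mu'_gt0 halg.
have [N tau_ratio] := nonincreasing_ratio_near1 c0 tau_ge_c (tau_le_prev halg) eps0.
exists N.+1 => // -[//|k] Nk.
rewrite (Jfun_iterate f_proper g_proper halg fxb gwb) -EFinM -EFinD lee_fin.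
exact: (pgrpda_descent f_proper f_convex g_proper g_convex h_convex h_diff h_grad h_lip
  hbeta psi_gt1 mu_gt0 mu'_gt0 halg Kxb fxb gwb yy eps0 psi_sqr margin
  (tau_ratio _ _ Nk) (tau_ratio _ _ (leqW Nk))).
Qed.
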